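(* Let $p$ be an odd prime, let $L/\mathbb{Q}_p$ be a finite unramified extension with ring of integers $\mathcal{O}_L$ and maximal ideal $\mathfrak{m}_L$. Let $F\in \mathcal{O}_L\langle\langle t\rangle\rangle$ be non-zero. Then $F$ has only finitely many zeroes in $\mathfrak{m}_L$. Moreover, if $k\ge 1$ and the reduction $\overline{F}\in (\mathcal{O}_L/\mathfrak{m}_L^k)\langle\langle t\rangle\rangle$ is non-zero, then the number of zeroes of $F$ in $\mathfrak{m}_L$ is bounded by a constant depending only on $\overline{F}$; that is, for every $k\ge1$ and every non-zero $G\in(\mathcal{O}_L/\mathfrak{m}_L^k)\langle\langle t\rangle\rangle$ there is $N(G)$ such that every $F\in\mathcal{O}_L\langle\langle t\rangle\rangle$ with $\overline{F}=G$ has at most $N(G)$ zeroes in $\mathfrak{m}_L$.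
   Context: For a commutative ring $R$, the divided power algebra $R\langle\langle t\rangle\rangle$ consists of formal sums $\sum_{n\ge0} a_n t^{[n]}$ with $a_n\in R$, with multiplication $t^{[n]}t^{[m]}=\binom{n+m}{n}t^{[n+m]}$. For $R=\mathcal{O}_L$ we regard $\mathcal{O}_L\langle\langle t\rangle\rangle$ as a subring of $L[[t]]$ via $t^{[n]}\mapsto t^n/n!$; such series converge on $\mathfrak{m}_L$ (as $p$ is odd and $L$ unramified), and a zero of $F$ in $\mathfrak{m}_L$ means a point $x\in\mathfrak{m}_L$ with $F(x)=\sum a_n x^n/n!=0$. The reduction map $\mathcal{O}_L\langle\langle t\rangle\rangle\to(\mathcal{O}_L/\mathfrak{m}_L^k)\langle\langle t\rangle\rangle$, $F\mapsto\overline{F}$, reduces each coefficient $a_n$ modulo $\mathfrak{m}_L^k$ and sends $t^{[n]}\mapsto t^{[n]}$. *)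

From mathcomp Require Import all_boot all_order all_algebra.
Set Implicit Arguments. Unset Strict Implicit. Unset Printing Implicit Defensive.
Import Order.TTheory GRing.Theory Num.Theory.
Local Open Scope ring_scope.

(* A finite unramified extension L of Q_p is described intrinsically as a
   field L with a (normalised) absolute value abs : L -> rat such that
   - abs is multiplicative and ultrametric, abs x = 0 iff x = 0,
   - every non-zero value is an integral power of p (discrete valuation
     whose value group is generated by |p|, i.e. p is a uniformiser:
     unramified), and |p| = 1/p,
   - the residue field O_L / m_L is finite,
   - L is complete.
   (Such fields are exactly the finite unramified extensions of Q_p.) *)
Definition unram_padic_field (p : nat) (L : fieldType) (abs : L -> rat) : Prop :=
  abs 0 = 0 /\
  (forall x : L, x != 0 -> exists n : int, abs x = (p%:Q) ^ n) /\
  (forall x y : L, abs (x * y) = abs x * abs y) /\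
  (forall x y : L, abs (x + y) <= Num.max (abs x) (abs y)) /\
  abs (p%:R) = (p%:Q)^-1 /\
  (exists s : seq L, (forall y, y \in s -> abs y <= 1) /\
     forall x, abs x <= 1 -> exists2 y, y \in s & abs (x - y) < 1) /\
  (forall u : nat -> L,
     (forall eps : rat, 0 < eps -> exists N : nat,
        forall m n, (N <= m)%N -> (N <= n)%N -> abs (u m - u n) < eps) ->
     exists l : L, forall eps : rat, 0 < eps -> exists N : nat,
        forall n, (N <= n)%N -> abs (u n - l) < eps).

Definition has_sum (L : fieldType) (abs : L -> rat) (u : nat -> L) (s : L) : Prop :=
  forall eps : rat, 0 < eps -> exists N : nat,
    forall n, (N <= n)%N -> abs (\sum_(i < n) u i - s) < eps.

(* An element F = sum_n a_n t^[n] of O_L<<t>> is given by its coefficient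
   sequence a with all |a n| <= 1. *)
Definition integral_dp (L : fieldType) (abs : L -> rat) (a : nat -> L) : Prop :=
  forall n, abs (a n) <= 1.

Definition dp_zero (L : fieldType) (abs : L -> rat) (a : nat -> L) (x : L) : Prop :=
  abs x < 1 /\ has_sum abs (fun n => a n * x ^+ n / (n`!)%:R) 0.

(* reductions modulo m_L^k = p^k O_L agree: a n = b n mod m_L^k for all n *)
Definition same_reduction (p : nat) (L : fieldType) (abs : L -> rat) (k : nat)
  (a b : nat -> L) : Prop :=
  forall n, abs (a n - b n) <= ((p%:Q) ^+ k)^-1.

Definition reduction_nonzero (p : nat) (L : fieldType) (abs : L -> rat) (k : nat)
  (b : nat -> L) : Prop :=
  exists n, ((p%:Q) ^+ k)^-1 < abs (b n).

(* Substituting x = p y turns F = \sum_n a_n x^n / n! into the power series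
   \sum_n c_n y^n with c_n = a_n p^n / n!, whose zeros in the closed unit disc
   correspond to the zeros of F in m_L.  Since v_p(n!) <= n / (p - 1) <= n / 2
   for odd p, |c_n| <= p^-(n - v_p(n!)) tends to 0 uniformly in F, while
   |c_m| >= |a_m| p^-m.  Hence beyond an index depending only on m and |a_m|,
   all |c_n| are smaller than |c_m|, which bounds the last index N at which
   |c_N| is maximal; by Strassmann's theorem N bounds the number of zeros.  When
   the reduction of F modulo p^k is non-zero at m, |a_m| is determined by it.

   Strassmann's theorem is proved without completeness: given N + 1 distinct
   zeros, reduce every monomial y^i modulo the polynomial vanishing at them.
   The reductions have integral coefficients, so the coefficient of y^N in the
   reduced partial sums has absolute value |c_N|; but by Lagrange interpolation
   it is a fixed combination of the partial sums at the zeros, which tend to 0. *)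

From mathcomp Require Import all_boot all_order all_algebra.
From mathcomp Require Import qpoly zify ring.
From Stdlib Require Import Classical.
Import Order.TTheory GRing.Theory Num.Theory.
Set Implicit Arguments.
Unset Strict Implicit.
Unset Printing Implicit Defensive.
Local Open Scope ring_scope.

Lemma logn_fact_le p n : prime p -> (p.-1 * logn p n`! <= n)%N.
Proof.
move=> p_prime; rewrite logn_fact //.
suff bound K : (p.-1 * \sum_(1 <= k < K.+1) n %/ p ^ k + n %/ p ^ K <= n)%N.
  by apply: leq_trans (bound n); apply: leq_addr.
elim: K => [|K IH]; first by rewrite big_geq // muln0 expn0 divn1.
rewrite big_nat_recr //= mulnDr -addnA; apply: leq_trans IH; rewrite leq_add2l.
have : (n %/ p ^ K.+1 * p <= n %/ p ^ K)%N by rewrite expnSr divnMA leq_divM.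
have := prime_gt0 p_prime; nia.
Qed.

Lemma ex_last_strict_max (d : Order.disp_t) (T : orderType d) (f : nat -> T) m k :
  (forall n, (m + k <= n)%N -> (f n < f m)%O) ->
  exists2 N, (N <= m + k)%N & forall n, (N < n)%N -> (f n < f N)%O.
Proof.
elim/ltn_ind: k m => k IH m f_lt.
have [/existsP [j f_le]|/existsPn f_gt] :=
  boolP [exists j : 'I_k, (f m <= f (m + j.+1)%N)%O].
  have j_lt := ltn_ord j.
  have f_lt' n : (m + j.+1 + (k - j.+1) <= n)%N -> (f n < f (m + j.+1)%N)%O.
    by move=> n_ge; apply: lt_le_trans f_le; apply: f_lt; lia.
  have [|N N_le N_max] := IH (k - j.+1)%N _ _ f_lt'; first lia.
  by exists N => //; apply: leq_trans N_le _; lia.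
exists m; first exact: leq_addr.
move=> n lt_mn; have [/f_lt //|n_lt] := leqP (m + k) n.
have j_lt : (n - m.+1 < k)%N by lia.
have := f_gt (Ordinal j_lt); rewrite -ltNge /=.
by have -> : (m + (n - m.+1).+1 = n)%N by lia.
Qed.

Lemma bounded_uniq_finite (T : eqType) (Z : T -> Prop) n :
  (forall s : seq T, uniq s -> (forall x, x \in s -> Z x) -> (size s <= n)%N) ->
  exists s : seq T, forall x, Z x -> x \in s.
Proof.
move=> bounded; apply: NNPP => no_cover.
suff [s [s_uniq s_Z s_size]] : exists s : seq T,
    [/\ uniq s, forall x, x \in s -> Z x & size s = n.+1].
  by have := bounded s s_uniq s_Z; rewrite s_size ltnn.
elim: n.+1 => [|k [s [s_uniq s_Z s_size]]]; first by exists [::].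
have [x [Zx x_notin]] : exists x, Z x /\ x \notin s.
  apply: NNPP => all_in; apply: no_cover; exists s => x Zx.
  by apply/negPn/negP => x_notin; apply: all_in; exists x.
exists (x :: s); split; rewrite /= ?x_notin ?s_size //.
by move=> z; rewrite inE => /predU1P [->|/s_Z].
Qed.

Lemma eventually_forall_lt n (P : nat -> nat -> Prop) :
  (forall j, (j < n)%N -> exists M, forall m, (M <= m)%N -> P j m) ->
  exists M, forall j m, (j < n)%N -> (M <= m)%N -> P j m.
Proof.
elim: n => [|n IH] ev; first by exists 0%N.
have [M1 P1] := IH (fun j j_lt => ev j (ltnW j_lt)).
have [M2 P2] := ev n (ltnSn n).
exists (maxn M1 M2) => j m; rewrite ltnS leq_eqVlt geq_max.
by move=> /predU1P [->|j_lt] /andP [le1 le2]; [apply: P2 | apply: P1].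
Qed.

Section NonArchimedean.
Variables (L : fieldType) (abs : L -> rat).
Hypothesis abs0 : abs 0 = 0.
Hypothesis abs_gt0 : forall x, x != 0 -> 0 < abs x.
Hypothesis absM : forall x y, abs (x * y) = abs x * abs y.
Hypothesis absD : forall x y, abs (x + y) <= Num.max (abs x) (abs y).

Lemma abs_ge0 x : 0 <= abs x.
Proof. by have [->|/abs_gt0/ltW] := eqVneq x 0; rewrite ?abs0. Qed.

Lemma abs1 : abs 1 = 1.
Proof.
have abs1_neq0 := lt0r_neq0 (abs_gt0 (oner_neq0 L)).
by apply: (mulIf abs1_neq0); rewrite -absM !mul1r.
Qed.

Lemma absN x : abs (- x) = abs x.
Proof.
suff absN1 : abs (-1) = 1 by rewrite -mulN1r absM absN1 mul1r.
apply/eqP; rewrite -sqrp_eq1 ?abs_ge0 // expr2 -absM.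
by rewrite mulrNN mulr1 abs1.
Qed.

Lemma absX x n : abs (x ^+ n) = abs x ^+ n.
Proof. by elim: n => [|n IH]; rewrite ?abs1 // !exprS absM IH. Qed.

Lemma absV x : abs x^-1 = (abs x)^-1.
Proof.
have [->|x0] := eqVneq x 0; first by rewrite invr0 abs0 invr0.
have absx_neq0 := lt0r_neq0 (abs_gt0 x0).
by apply: (mulfI absx_neq0); rewrite -absM !mulfV ?abs1.
Qed.

Lemma absD_le x y B : abs x <= B -> abs y <= B -> abs (x + y) <= B.
Proof. by move=> x_le y_le; apply: le_trans (absD x y) _; rewrite ge_max x_le. Qed.

Lemma absD_lt x y B : abs x < B -> abs y < B -> abs (x + y) < B.
Proof. by move=> x_lt y_lt; apply: le_lt_trans (absD x y) _; rewrite gt_max x_lt. Qed.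

Lemma abs_sum_le (I : Type) (r : seq I) (P : pred I) (F : I -> L) B :
  0 <= B -> (forall i, P i -> abs (F i) <= B) -> abs (\sum_(i <- r | P i) F i) <= B.
Proof.
move=> B_ge0 F_le; apply: (big_ind (fun z => abs z <= B)) => //; first by rewrite abs0.
by move=> x y; apply: absD_le.
Qed.

Lemma abs_sum_lt (I : Type) (r : seq I) (P : pred I) (F : I -> L) B :
  0 < B -> (forall i, P i -> abs (F i) < B) -> abs (\sum_(i <- r | P i) F i) < B.
Proof.
move=> B_gt0 F_lt; apply: (big_ind (fun z => abs z < B)) => //; first by rewrite abs0.
by move=> x y; apply: absD_lt.
Qed.

Lemma abs_natr_le1 n : abs n%:R <= 1.
Proof.
elim: n => [|n IH]; first by rewrite abs0 ler01.
by rewrite -addn1 natrD; apply: absD_le; rewrite ?abs1.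
Qed.

Lemma abs_gt0_neq0 x : 0 < abs x -> x != 0.
Proof. by apply: contraTneq => ->; rewrite abs0 ltxx. Qed.

Lemma abs_sub_lt_eq x y : abs (x - y) < abs y -> abs x = abs y.
Proof.
move=> close; apply/le_anti/andP; split.
  by rewrite -[x](subrK y) absD_le // ltW.
move: close; rewrite -absN opprB => close.
have := absD x (y - x); rewrite addrC subrK le_max => /orP [//|].
by move=> /le_lt_trans/(_ close); rewrite ltxx.
Qed.

Lemma has_sum_ext (u v : nat -> L) s :
  (forall n, u n = v n) -> has_sum abs u s -> has_sum abs v s.
Proof.
move=> uv u_sum eps eps_gt0; have [N N_ok] := u_sum eps eps_gt0.
by exists N => n /N_ok; under eq_bigr do rewrite uv.
Qed.

Definition integral_poly (q : {poly L}) := forall j, abs q`_j <= 1.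

Lemma integral_poly1 : integral_poly 1.
Proof. by move=> j; rewrite coef1; case: (j == 0%N); rewrite ?abs1 ?abs0. Qed.

Lemma integral_polyM q r : integral_poly q -> integral_poly r -> integral_poly (q * r).
Proof.
move=> q_int r_int j; rewrite coefM; apply: abs_sum_le => // i _.
by rewrite absM mulr_ile1 ?abs_ge0.
Qed.

Lemma integral_polyXsubC x : abs x <= 1 -> integral_poly ('X - x%:P).
Proof.
move=> x_le [|[|j]]; rewrite coefB coefX coefC /=.
- by rewrite sub0r absN.
- by rewrite subr0 abs1.
- by rewrite subr0 abs0.
Qed.

Section Strassmann.
Variables (N : nat) (y : nat -> L).
Hypothesis y_inj : injective y.
Hypothesis y_int : forall j, (j <= N)%N -> abs (y j) <= 1.

Definition node_poly := \prod_(j < N.+1) ('X - (y j)%:P).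

Lemma integral_node_poly : integral_poly node_poly.
Proof.
apply: (big_ind integral_poly); [exact: integral_poly1|exact: integral_polyM|].
by move=> j _; apply/integral_polyXsubC/y_int; rewrite -ltnS.
Qed.

Lemma size_node_poly : size node_poly = N.+2.
Proof. by rewrite size_prod_XsubC -[index_enum _]enumT size_enum_ord. Qed.

Lemma coef_node_poly_lead : node_poly`_N.+1 = 1.
Proof.
have /monicP := monic_prod_XsubC (index_enum 'I_N.+1) xpredT y.
by rewrite lead_coefE size_node_poly.
Qed.

Lemma root_node_poly j : (j <= N)%N -> node_poly.[y j] = 0.
Proof.
rewrite -ltnS => j_lt; rewrite horner_prod (bigD1 (Ordinal j_lt)) //=.
by rewrite hornerXsubC subrr mul0r.
Qed.

(* The remainder of ['X^n] modulo [node_poly], computed by the division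
   algorithm so that its coefficients visibly stay integral. *)
Fixpoint Xpow_red n : {poly L} :=
  if n is n'.+1 then 'X * Xpow_red n' - (Xpow_red n')`_N *: node_poly else 1.

Lemma horner_Xpow_red n j : (j <= N)%N -> (Xpow_red n).[y j] = y j ^+ n.
Proof.
move=> j_le; elim: n => [|n IH] /=; first by rewrite hornerC.
by rewrite hornerD hornerN hornerZ root_node_poly // mulr0 subr0 hornerM hornerX IH exprS.
Qed.

Lemma coef_Xpow_red_gt n j : (N < j)%N -> (Xpow_red n)`_j = 0.
Proof.
elim: n j => [|n IH] [|j] //= j_gt; first by rewrite coef1.
rewrite coefB coefXM coefZ /=.
have [->|j_neq] := eqVneq j N; first by rewrite coef_node_poly_lead mulr1 subrr.
have {j_neq}j_gt : (N < j)%N by rewrite ltn_neqAle eq_sym j_neq -ltnS.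
by rewrite IH // [node_poly`_ _]nth_default ?size_node_poly // mulr0 subr0.
Qed.

Lemma size_Xpow_red n : (size (Xpow_red n) <= N.+1)%N.
Proof. by apply/leq_sizeP => j; apply: coef_Xpow_red_gt. Qed.

Lemma integral_Xpow_red n : integral_poly (Xpow_red n).
Proof.
elim: n => [|n IH] /=; first exact: integral_poly1.
move=> j; rewrite coefB coefXM coefZ; apply: absD_le.
  by case: (j == 0%N); rewrite ?abs0 ?ler01.
by rewrite absN absM mulr_ile1 ?abs_ge0 ?integral_node_poly.
Qed.

Lemma Xpow_red_small n : (n <= N)%N -> Xpow_red n = 'X^n.
Proof.
elim: n => [|n IH] n_lt //=; rewrite IH ?(ltnW n_lt) // coefXn.
by rewrite eq_sym (ltn_eqF n_lt) scale0r subr0 exprS.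
Qed.

Lemma coef_interpolation_bound : exists2 W : rat, 0 < W &
  forall q : {poly L}, (size q <= N.+1)%N -> forall B,
    (forall j, (j <= N)%N -> abs q.[y j] < B) -> abs q`_N < B * W.
Proof.
pose lg := tnth (N.+1.-lagrange y).
pose W := 1 + \sum_(i < N.+1) abs (lg i)`_N.
have sum_ge0 : 0 <= \sum_(i < N.+1) abs (lg i)`_N by apply: sumr_ge0 => i _; apply: abs_ge0.
have W_gt0 : 0 < W by rewrite ltr_wpDr.
have lg_le i : abs (lg i)`_N <= W.
  apply: le_trans (_ : _ <= \sum_(k < N.+1) abs (lg k)`_N) _; last by rewrite /W lerDr ler01.
  by rewrite (bigD1 i) //= lerDl sumr_ge0 // => k _; apply: abs_ge0.
exists W => // q q_size B q_lt.
rewrite (lagrange_gen (ltn0Sn N) y_inj q_size) coef_sum.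
have B_gt0 : 0 < B by apply: le_lt_trans (q_lt 0%N (leq0n N)); apply: abs_ge0.
apply: abs_sum_lt => [|i _]; first exact: mulr_gt0.
rewrite coefCM absM; apply: le_lt_trans (ler_wpM2l (abs_ge0 _) (lg_le i)) _.
by rewrite ltr_pM2r // q_lt // -ltnS.
Qed.

Variable c : nat -> L.
Hypothesis c_dom : forall n, (N < n)%N -> abs (c n) < abs (c N).

Lemma abs_lead_gt0 : 0 < abs (c N).
Proof. by apply: le_lt_trans (c_dom (ltnSn N)); apply: abs_ge0. Qed.

Definition partial_poly M := \sum_(i < M) c i *: Xpow_red i.

Lemma size_partial_poly M : (size (partial_poly M) <= N.+1)%N.
Proof.
apply/leq_sizeP => j j_gt; rewrite coef_sum big1 // => i _.
by rewrite coefZ coef_Xpow_red_gt ?mulr0.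
Qed.

Lemma horner_partial_poly M j :
  (j <= N)%N -> (partial_poly M).[y j] = \sum_(i < M) c i * y j ^+ i.
Proof.
by move=> j_le; rewrite horner_sum; apply: eq_bigr => i _; rewrite hornerZ horner_Xpow_red.
Qed.

Lemma abs_coef_partial_poly M : (N < M)%N -> abs (partial_poly M)`_N = abs (c N).
Proof.
move=> N_lt; have cN_gt0 := abs_lead_gt0.
rewrite coef_sum (bigD1 (Ordinal N_lt)) //= coefZ Xpow_red_small // coefXn eqxx mulr1.
apply: abs_sub_lt_eq; rewrite addrAC subrr add0r.
apply: abs_sum_lt => // i i_neq; rewrite coefZ absM.
have [i_lt|i_gt|i_eq] := ltngtP i N.
- by rewrite Xpow_red_small ?(ltnW i_lt) // coefXn (gtn_eqF i_lt) abs0 mulr0.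
- by apply: le_lt_trans (c_dom i_gt); rewrite ler_piMr ?abs_ge0 ?integral_Xpow_red.
- by move: i_neq; rewrite -val_eqE /= i_eq eqxx.
Qed.

Lemma strassmann_nodes :
  ~ (forall j, (j <= N)%N -> has_sum abs (fun i => c i * y j ^+ i) 0).
Proof.
move=> zeros; have [W W_gt0 interp] := coef_interpolation_bound.
pose eps := abs (c N) / W.
have eps_gt0 : 0 < eps by rewrite divr_gt0 ?abs_lead_gt0.
have /eventually_forall_lt [M0 M0_ok] : forall j, (j < N.+1)%N ->
    exists M, forall m, (M <= m)%N -> abs (\sum_(i < m) c i * y j ^+ i) < eps.
  move=> j j_lt; have [M M_ok] := zeros j j_lt eps eps_gt0.
  by exists M => m /M_ok; rewrite subr0.
pose M := maxn M0 N.+1.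
have : abs (partial_poly M)`_N < eps * W.
  apply: interp (size_partial_poly M) _ _ => j j_le.
  by rewrite horner_partial_poly // M0_ok ?leq_maxl.
by rewrite abs_coef_partial_poly ?leq_maxr // divfK ?lt0r_neq0 // ltxx.
Qed.

End Strassmann.

(* qpoly's Lagrange interpolation needs nodes given by an injective [nat -> L]. *)
Lemma ex_injective_extension (s : seq L) (t : L) :
  uniq s -> (forall x, x \in s -> abs x <= 1) -> 1 < abs t ->
  exists2 y : nat -> L, injective y & forall j, (j < size s)%N -> y j = nth 0 s j.
Proof.
move=> s_uniq s_int t_gt1.
pose y j := if (j < size s)%N then nth 0 s j else t ^+ j.+1.
have abs_tail j : (size s <= j)%N -> 1 < abs (y j).
  by move=> j_ge; rewrite /y ltnNge j_ge /= absX exprn_egt1.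
have abs_head j : (j < size s)%N -> abs (y j) <= 1.
  by move=> j_lt; rewrite /y j_lt s_int ?mem_nth.
exists y => [i j|j j_lt]; last by rewrite /y j_lt.
have [i_lt|i_ge] := ltnP i (size s); have [j_lt|j_ge] := ltnP j (size s).
- by rewrite /y i_lt j_lt => /eqP; rewrite nth_uniq // => /eqP.
- by move=> yij; have := abs_tail j j_ge; rewrite -yij ltNge abs_head.
- by move=> yij; have := abs_tail i i_ge; rewrite yij ltNge abs_head.
- rewrite /y ltnNge i_ge ltnNge j_ge /= => /(congr1 abs); rewrite !absX.
  by move/(ieexprIn (lt_trans ltr01 t_gt1) (negbT (gt_eqF t_gt1))) => [].
Qed.

Theorem strassmann (c : nat -> L) N (t : L) :
  (forall n, (N < n)%N -> abs (c n) < abs (c N)) -> 1 < abs t ->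
  forall s, uniq s ->
    (forall x, x \in s -> abs x <= 1 /\ has_sum abs (fun n => c n * x ^+ n) 0) ->
  (size s <= N)%N.
Proof.
move=> c_dom t_gt1 s s_uniq s_zeros; rewrite leqNgt; apply/negP => N_lt.
have [y y_inj y_s] := ex_injective_extension s_uniq (fun x xs => (s_zeros x xs).1) t_gt1.
have y_in j : (j <= N)%N -> y j \in s.
  by move=> j_le; rewrite y_s ?mem_nth //; apply: leq_ltn_trans N_lt.
apply: (strassmann_nodes y_inj _ c_dom) => j /y_in /s_zeros [] //.
Qed.

Section Padic.
Variable p : nat.
Hypothesis p_prime : prime p.
Hypothesis p_gt2 : (2 < p)%N.
Hypothesis abs_value_group : forall x, x != 0 -> exists n : int, abs x = p%:Q ^ n.
Hypothesis abs_p : abs p%:R = p%:Q^-1.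

Lemma p_gt0 : 0 < p%:Q.
Proof. by rewrite ltr0n prime_gt0. Qed.

Lemma natr_p_neq0 : p%:R != 0 :> L.
Proof. by apply: abs_gt0_neq0; rewrite abs_p invr_gt0 p_gt0. Qed.

Lemma abs_lt1_le_inv_p x : abs x < 1 -> abs x <= p%:Q^-1.
Proof.
have [->|x_neq0] := eqVneq x 0; first by rewrite abs0 invr_ge0 ler0n.
have p_ge1 : 1 <= p%:Q by rewrite ler1n prime_gt0.
have [[n|n] ->] := abs_value_group x_neq0.
  by rewrite -exprnP ltNge exprn_ege1.
rewrite NegzE -exprnN lef_pV2 ?posrE ?exprn_gt0 ?p_gt0 // => _.
by rewrite exprS ler_peMr ?exprn_ege1 ?ler0n.
Qed.

Lemma abs_natr_coprime m : coprime p m -> abs m%:R = 1.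
Proof.
move=> co; have [a _] := @Bezoutl p m (prime_gt0 p_prime).
rewrite (eqP co) => /dvdnP [k Ek].
apply/le_anti; rewrite abs_natr_le1 /= leNgt; apply/negP => m_lt1.
have : abs ((k * p)%:R - (a * m)%:R : L) < 1.
  apply: absD_lt; rewrite ?absN natrM absM.
    apply: le_lt_trans (ler_wpM2r (abs_ge0 _) (abs_natr_le1 k)) _.
    by rewrite mul1r abs_p invf_lt1 ?p_gt0 // ltr1n prime_gt1.
  by apply: le_lt_trans (ler_wpM2r (abs_ge0 _) (abs_natr_le1 a)) _; rewrite mul1r.
by rewrite -Ek natrD addrK abs1 ltxx.
Qed.

Lemma abs_fact n : abs n`!%:R = (p%:Q ^+ logn p n`!)^-1.
Proof.
have [m co fact_eq] := pfactor_coprime p_prime (fact_gt0 n).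
by rewrite [in LHS]fact_eq natrM absM abs_natr_coprime // natrX absX abs_p exprVn mul1r.
Qed.

Lemma natr_fact_neq0 n : n`!%:R != 0 :> L.
Proof. by apply: abs_gt0_neq0; rewrite abs_fact invr_gt0 exprn_gt0 ?p_gt0. Qed.

(* [F (p y) = \sum_n rescaled a n * y ^+ n] *)
Definition rescaled (a : nat -> L) n := a n * p%:R ^+ n / n`!%:R.

Lemma abs_rescaled_le a n :
  abs (a n) <= 1 -> abs (rescaled a n) <= (p%:Q ^+ (n - logn p n`!))^-1.
Proof.
move=> a_le; have e_le : (logn p n`! <= n)%N.
  by apply: leq_trans (logn_fact_le n p_prime); rewrite leq_pmull //; lia.
rewrite !absM absX abs_p absV abs_fact invrK -mulrA -!exprVn.
set e := logn p n`! in e_le *.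
have -> : p%:Q^-1 ^+ n * p%:Q ^+ e = p%:Q^-1 ^+ (n - e).
  rewrite -{1}(subnK e_le) exprD -mulrA -exprMn mulVf ?expr1n ?mulr1 //.
  exact: lt0r_neq0 p_gt0.
by rewrite ler_piMl ?exprn_ge0 ?invr_ge0 ?ler0n.
Qed.

Lemma abs_rescaled_ge a m : abs (a m) / p%:Q ^+ m <= abs (rescaled a m).
Proof.
rewrite !absM absX abs_p absV exprVn.
rewrite ler_peMr ?mulr_ge0 ?abs_ge0 ?invr_ge0 ?exprn_ge0 ?ler0n //.
by rewrite invf_ge1 ?abs_natr_le1 // abs_fact invr_gt0 exprn_gt0 ?p_gt0.
Qed.

Lemma abs_rescaled_eventually_lt g : 0 < g -> exists K, forall a, integral_dp abs a ->
  forall n, (K <= n)%N -> abs (rescaled a n) < g.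
Proof.
move=> g_gt0; pose k := Num.Def.archi_bound g^-1.
have k_gt : g^-1 < k%:R by rewrite archi_boundP // invr_ge0 ltW.
exists (2 * k)%N => a a_int n n_ge.
have := logn_fact_le n p_prime; set e := logn p n`! => e_le.
apply: le_lt_trans (abs_rescaled_le (a_int n)) _.
rewrite -[g]invrK ltf_pV2 ?posrE ?invr_gt0 ?exprn_gt0 ?p_gt0 //.
apply: lt_trans k_gt _; rewrite -natrX ltr_nat.
apply: leq_ltn_trans (ltn_expl _ (prime_gt1 p_prime)).
(* p odd: 2 v_p(n!) <= (p - 1) v_p(n!) <= n *)
have : (2 * e <= p.-1 * e)%N by rewrite leq_mul2r; apply/orP; right; lia.
lia.
Qed.

Lemma dp_zero_rescaled a x : dp_zero abs a x ->
  abs (x / p%:R) <= 1 /\ has_sum abs (fun n => rescaled a n * (x / p%:R) ^+ n) 0.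
Proof.
move=> [x_lt1 x_sum]; split.
  rewrite absM absV abs_p invrK.
  apply: le_trans (ler_wpM2r (ler0n _ p) (abs_lt1_le_inv_p x_lt1)) _.
  by rewrite mulVf ?lt0r_neq0 ?p_gt0.
apply: has_sum_ext x_sum => n; rewrite /rescaled expr_div_n.
have pn_neq0 := expf_neq0 n natr_p_neq0.
by field; rewrite pn_neq0 natr_fact_neq0.
Qed.

Lemma dp_zeros_bound m beta : 0 < beta -> exists N0, forall a, integral_dp abs a ->
  beta <= abs (a m) -> forall s, uniq s -> (forall x, x \in s -> dp_zero abs a x) ->
  (size s <= N0)%N.
Proof.
move=> beta_gt0.
have [K K_ok] := abs_rescaled_eventually_lt (divr_gt0 beta_gt0 (exprn_gt0 m p_gt0)).
exists (m + K)%N => a a_int a_m s s_uniq s_zeros.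
have dom n : (m + K <= n)%N -> abs (rescaled a n) < abs (rescaled a m).
  move=> n_ge; apply: lt_le_trans (K_ok a a_int n _) _.
    exact: leq_trans (leq_addl _ _) n_ge.
  apply: le_trans (abs_rescaled_ge a m).
  by rewrite ler_wpM2r ?invr_ge0 ?exprn_ge0 ?ler0n.
have [N N_le N_dom] := ex_last_strict_max dom.
apply: leq_trans N_le; rewrite -(size_map (fun x => x / p%:R)).
apply: (strassmann (t := p%:R^-1) N_dom).
- by rewrite absV abs_p invrK ltr1n prime_gt1.
- by rewrite map_inj_uniq // => x y; apply: (mulIf (invr_neq0 natr_p_neq0)).
- by move=> y /mapP [x /s_zeros x_zero ->]; apply: dp_zero_rescaled.
Qed.

Lemma dp_zeros_finite a : integral_dp abs a -> (exists n, a n != 0) ->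
  exists s : seq L, forall x, dp_zero abs a x -> x \in s.
Proof.
move=> a_int [n an_neq0]; have [N0 N0_ok] := dp_zeros_bound n (abs_gt0 an_neq0).
by apply: bounded_uniq_finite => s; apply: N0_ok a_int (lexx _) s.
Qed.

Lemma dp_zeros_bound_reduction k b : integral_dp abs b -> reduction_nonzero p abs k b ->
  exists N0, forall a, integral_dp abs a -> same_reduction p abs k a b ->
  forall s : seq L, uniq s -> (forall x, x \in s -> dp_zero abs a x) -> (size s <= N0)%N.
Proof.
move=> b_int [n bn_gt]; have bn_gt0 : 0 < abs (b n).
  by apply: le_lt_trans bn_gt; rewrite invr_ge0 exprn_ge0 ?ler0n.
have [N0 N0_ok] := dp_zeros_bound n bn_gt0.
exists N0 => a a_int ab; apply: N0_ok a_int _.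
by rewrite (abs_sub_lt_eq (le_lt_trans (ab n) bn_gt)).
Qed.

End Padic.
End NonArchimedean.

Theorem lemma2p4 (p : nat) (L : fieldType) (abs : L -> rat) :
  prime p -> odd p -> unram_padic_field p abs ->
  (forall a : nat -> L, integral_dp abs a -> (exists n, a n != 0) ->
     exists s : seq L, forall x, dp_zero abs a x -> x \in s) /\
  (forall k : nat, (1 <= k)%N ->
     forall b : nat -> L, integral_dp abs b -> reduction_nonzero p abs k b ->
     exists N : nat, forall a : nat -> L, integral_dp abs a ->
       same_reduction p abs k a b ->
       forall s : seq L, uniq s -> (forall x, x \in s -> dp_zero abs a x) ->
       (size s <= N)%N).
Proof.
move=> p_prime p_odd [abs0 [abs_value_group [absM [absD [abs_p _]]]]].
have abs_gt0 x : x != 0 -> 0 < abs x.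
  by move=> /abs_value_group [n ->]; rewrite exprz_gt0 // ltr0n prime_gt0.
have p_gt2 : (2 < p)%N.
  have p_neq2 : 2%N != p by apply: contraTneq p_odd => <-.
  by rewrite ltn_neqAle p_neq2 prime_gt1.
split=> [|k _].
  exact: (dp_zeros_finite abs0 abs_gt0 absM absD p_prime p_gt2 abs_value_group abs_p).
exact: (dp_zeros_bound_reduction abs0 abs_gt0 absM absD p_prime p_gt2 abs_value_group abs_p).
Qed.
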